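(* $\widetilde{\mathbb{C}}=\widehat{\mathbb{C}}=\mathbb{Q}$.
   Context: Let $K$ be a field. For $r\in K$, a finite set $A(r)$ with $\{r\}\subseteq A(r)\subseteq K$ is called adequate for $r$ if every mapping $f:A(r)\to K$ satisfying (1) if $1\in A(r)$ then $f(1)=1$; (2) if $a,b\in A(r)$ and $a+b\in A(r)$ then $f(a+b)=f(a)+f(b)$; (3) if $a,b\in A(r)$ and $a\cdot b\in A(r)$ then $f(a\cdot b)=f(a)\cdot f(b)$, also satisfies $f(r)=r$. $\widetilde{K}$ denotes the set of all $r\in K$ for which some finite set adequate for $r$ exists. $\widehat{K}=\bigcap_{\sigma\in \mathrm{End}(K)}\{x\in K:\sigma(x)=x\}$, where $\mathrm{End}(K)$ is the set of all field endomorphisms of $K$. *)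

(* the field C is modelled as  R[i] = complex R  (mathcomp-real-closed)
   over Stdlib's classical reals R (a realType, hence an rcfType, via Rstruct). *)
From HB Require Import structures.
From mathcomp Require Import all_boot all_order all_algebra.
From mathcomp Require Import complex.
From mathcomp Require Import Rstruct.
From Stdlib Require Import Reals.
Set Implicit Arguments. Unset Strict Implicit. Unset Printing Implicit Defensive.
Import Order.TTheory GRing.Theory Num.Theory.
Local Open Scope ring_scope.

Definition CC : fieldType := complex Rdefinitions.R.

Definition adequate (K : fieldType) (A : seq K) (r : K) : Prop :=
  r \in A /\
  forall f : K -> K,
    (1 \in A -> f 1 = 1) ->
    (forall a b, a \in A -> b \in A -> a + b \in A -> f (a + b) = f a + f b) ->
    (forall a b, a \in A -> b \in A -> a * b \in A -> f (a * b) = f a * f b) ->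
    f r = r.

Definition Ktilde (K : fieldType) (r : K) : Prop := exists A : seq K, adequate A r.

Definition Khat (K : fieldType) (x : K) : Prop :=
  forall sigma : {rmorphism K -> K}, sigma x = x.

Definition is_rational (K : fieldType) (x : K) : Prop := exists q : rat, x = ratr q.

From HB Require Import structures.
From mathcomp Require Import all_boot all_order all_algebra.
From mathcomp Require Import boolp ring zify.
From mathcomp Require classical_sets.
From mathcomp Require Import complex Rstruct.

(* An endomorphism fixes 1 and respects the sums and products inside a finite
   set, so it fixes every element having an adequate set; and every rational
   n/d has one, namely {0, n/d, -n/d, 1, 2, ..., max(|n|, d)}.  Every
   endomorphism fixes Q, so it remains to move each x outside Q by an
   endomorphism of C.  Send x to another root of its minimal polynomial over Q
   if x is algebraic, and to x + 1 otherwise, and extend this embedding of Q(x)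
   by Zorn's lemma.  The extension step adjoins one element a to a partial
   embedding t : D -> C; it always succeeds provided every t(y) is algebraic
   over D, because then a transcendental a may simply be sent to itself. *)

Set Implicit Arguments. Unset Strict Implicit. Unset Printing Implicit Defensive.
Import Order.TTheory GRing.Theory Num.Theory.
Local Open Scope ring_scope.

Lemma Ktilde_Khat (K : fieldType) (x : K) : Ktilde x -> Khat x.
Proof. by case=> A [_ fixA] s; apply: fixA => *; rewrite ?rmorph1 ?rmorphD ?rmorphM. Qed.

Lemma rational_Khat (K : fieldType) (x : K) : is_rational x -> Khat x.
Proof. by case=> q -> s; apply: fmorph_rat. Qed.

Section AdditiveOnSeq.
Variables (R : nzRingType) (A : seq R) (f : R -> R).
Hypotheses (f1 : 1 \in A -> f 1 = 1)
  (fD : forall a b, a \in A -> b \in A -> a + b \in A -> f (a + b) = f a + f b).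

Lemma additive_on_seq_fix0 : 0 \in A -> f 0 = 0.
Proof. by move=> A0; apply/(addrI (f 0)); rewrite -fD ?addr0. Qed.

Lemma additive_on_seq_fix_nat N : (forall k, (0 < k <= N)%N -> k%:R \in A) ->
  forall k, (0 < k <= N)%N -> f k%:R = k%:R.
Proof.
move=> natA; elim=> // -[_ kN|k IHk kN]; first exact: f1 (natA 1%N kN).
have A1 : 1 \in A by apply: (natA 1%N); lia.
have Ak : k.+1%:R \in A by apply: natA; lia.
have k1N : (0 < k.+1 <= N)%N by lia.
by rewrite mulrS fD ?f1 ?IHk // -mulrS; apply: natA.
Qed.

End AdditiveOnSeq.

Lemma rational_Ktilde (K : numFieldType) (x : K) : is_rational x -> Ktilde x.
Proof.
case=> q ->{x}; set x : K := ratr q.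
set n := `|numq q|%N; set d := `|denq q|%N.
have d_gt0 : (0 < d)%N by rewrite absz_gt0 denq_neq0.
have xd : `|x| * d%:R = n%:R.
  by rewrite !natr_absz !intr_norm -normrM divfK ?intr_eq0 ?denq_neq0.
pose A := [:: 0, x, - x & [seq k%:R | k <- iota 1 (maxn n d)]].
have natA k : (0 < k <= maxn n d)%N -> k%:R \in A.
  by move=> kN; rewrite !inE map_f ?orbT // mem_iota; lia.
have xR : x \is Num.real by rewrite /x /ratr rpred_div ?realz.
have A0 : 0 \in A by rewrite inE eqxx.
have Anorm : `|x| \in A by case: (real_ge0P xR) => _; rewrite !inE eqxx !orbT.
exists A; split=> [|f f1 fD fM]; first by rewrite !inE eqxx orbT.
have fnat := additive_on_seq_fix_nat f1 fD natA.
have fnorm : f `|x| = `|x|.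
  have [n0|n_gt0] := posnP n.
    move: xd; rewrite n0 mulr0n => /eqP.
    rewrite mulf_eq0 pnatr_eq0 (gtn_eqF d_gt0) orbF normr_eq0 => /eqP ->.
    by rewrite normr0 (additive_on_seq_fix0 fD).
  have nN : (0 < n <= maxn n d)%N by lia.
  have dN : (0 < d <= maxn n d)%N by lia.
  have := fM _ _ Anorm (natA _ dN); rewrite xd (natA _ nN) !fnat // => /(_ isT) nE.
  by apply: (mulIf (_ : d%:R != 0)); rewrite ?pnatr_eq0 -?lt0n // -nE xd.
case: (real_ge0P xR) => [x_ge0|x_lt0]; first by rewrite -(ger0_norm x_ge0).
have xA : x \in A by rewrite !inE eqxx orbT.
have NxA : - x \in A by rewrite !inE eqxx !orbT.
have := fD _ _ NxA xA; rewrite addNr A0 (additive_on_seq_fix0 fD A0) -(ltr0_norm x_lt0) fnorm.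
by move=> /(_ isT)/esym/eqP; rewrite addrC addr_eq0 => /eqP ->; rewrite ltr0_norm ?opprK.
Qed.

Definition morph_on (R : nzRingType) (D : {pred R}) (t : R -> R) :=
  [/\ {in D &, {morph t : x y / x - y}}, {in D &, {morph t : x y / x * y}} & t 1 = 1].

Lemma morph_on_id (R : nzRingType) (D : {pred R}) : morph_on D id.
Proof. by []. Qed.

Lemma rmorph_fracB (R : comNzRingType) (F : fieldType) (f : {rmorphism R -> F}) p q p' q' :
  f q != 0 -> f q' != 0 -> f p / f q - f p' / f q' = f (p * q' - p' * q) / f (q * q').
Proof. by move=> q_nz q'_nz; rewrite rmorphB !rmorphM; field; rewrite q_nz q'_nz. Qed.

Lemma rmorph_fracM (R : comNzRingType) (F : fieldType) (f : {rmorphism R -> F}) p q p' q' :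
  f p / f q * (f p' / f q') = f (p * p') / f (q * q').
Proof. by rewrite !rmorphM mulf_div. Qed.

Lemma rmorph_fracV (R : comNzRingType) (F : fieldType) (f : {rmorphism R -> F}) p q p' q' :
  f p / f q / (f p' / f q') = f (p * q') / f (q * p').
Proof. by rewrite invf_div mulf_div !rmorphM. Qed.

Section MorphOnTotal.
Variables (R : nzRingType) (s : R -> R) (s_morph : morph_on predT s).

(* The proof argument lets the instances below be found from the term alone. *)
Definition total_morph of morph_on predT s := s.

Fact total_morph_zmod : zmod_morphism (total_morph s_morph).
Proof. by have [sB _ _] := s_morph; exact: in2T sB. Qed.

Fact total_morph_monoid : monoid_morphism (total_morph s_morph).
Proof. by have [_ sM s1] := s_morph; split=> //; exact: in2T sM. Qed.

HB.instance Definition _ :=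
  GRing.isZmodMorphism.Build R R (total_morph s_morph) total_morph_zmod.
HB.instance Definition _ :=
  GRing.isMonoidMorphism.Build R R (total_morph s_morph) total_morph_monoid.

End MorphOnTotal.

Section Embeddings.
Variable L : numClosedFieldType.
Implicit Types (D : {pred L}) (t : L -> L) (a b c : L) (p q : {poly L}).

Definition algebraic_over D c :=
  exists2 p, p \is a polyOver D & p != 0 /\ root p c.

(* Exactly what makes p(a)/q(a) |-> t(p)(b)/t(q)(b) well defined on D(a). *)
Definition compatible D t a b :=
  forall p, p \is a polyOver D -> root p a = root (map_poly t p) b.

Definition admissible D t :=
  [/\ GRing.divring_closed D, morph_on D t & {in D, forall y, algebraic_over D (t y)}].

Definition extends D t D2 t2 := {subset D <= D2} /\ {in D, t2 =1 t}.

Lemma divring_closed0 D : GRing.divring_closed D -> 0 \in D.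
Proof. by case=> D1 DB _; rewrite -(subrr 1) DB. Qed.

Lemma polyOver_coefP D p : 0 \in D -> reflect (forall i, p`_i \in D) (p \is a polyOver D).
Proof.
move=> D0; apply: (iffP (all_nthP 0)) => Dp i; last by move=> _; exact: Dp.
by case: (ltnP i (size p)) => [/Dp // | le]; rewrite nth_default.
Qed.

Lemma divring_closedM D : GRing.divring_closed D -> {in D &, forall x y, x * y \in D}.
Proof.
case=> D1 _ DV x y Dx Dy; rewrite -[y]invrK; apply: (DV) => //.
by rewrite -div1r DV.
Qed.

Lemma extends_refl D t : extends D t D t.
Proof. by split. Qed.

Lemma extends_trans D1 t1 D2 t2 D3 t3 :
  extends D1 t1 D2 t2 -> extends D2 t2 D3 t3 -> extends D1 t1 D3 t3.
Proof.
move=> [s12 e12] [s23 e23]; split=> [y /s12/s23 // | y D1y].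
by rewrite e23 ?e12 // s12.
Qed.

Lemma algebraic_over_sub D1 D2 c :
  {subset D1 <= D2} -> algebraic_over D1 c -> algebraic_over D2 c.
Proof. by move=> sD [p Dp pc]; exists p => //; apply: polyOverS Dp. Qed.

Section MorphOn.
Variables (D : {pred L}) (t : L -> L).
Hypotheses (HD : GRing.divring_closed D) (Ht : morph_on D t).

Lemma morph_on0 : t 0 = 0.
Proof.
have D0 := divring_closed0 HD; case: Ht => tB _ _.
by rewrite -(subrr 0) tB ?subrr.
Qed.

Lemma morph_on_eq0 x : x \in D -> (t x == 0) = (x == 0).
Proof.
move=> Dx; apply/idP/idP => [tx0|/eqP->]; last by rewrite morph_on0.
apply/negPn/negP => x_nz; case: HD Ht => D1 _ DV [_ tM t1].
have Dx' : x^-1 \in D by rewrite -div1r DV.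
by move: (tM _ _ Dx Dx'); rewrite mulfV // t1 (eqP tx0) mul0r => /eqP; rewrite oner_eq0.
Qed.

Lemma coef_map_morph_on p i : (map_poly t p)`_i = t p`_i.
Proof. by rewrite coef_map_id0 // morph_on0. Qed.

Lemma map_poly_morph_on_eq0 p : p \is a polyOver D -> (map_poly t p == 0) = (p == 0).
Proof.
move=> /(polyOver_coefP _ (divring_closed0 HD)) Dp.
apply/idP/idP => [|/eqP->]; last by rewrite map_poly0.
apply: contraLR => p_nz; apply/eqP => /(congr1 (fun q => q`_(size p).-1))/eqP.
by rewrite coef_map_morph_on coef0 (morph_on_eq0 (Dp _)) -lead_coefE lead_coef_eq0 (negbTE p_nz).
Qed.

End MorphOn.

Section Subfield.
Variables (D : {pred L}) (HD : GRing.divring_closed D).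

Inductive subfield := Subfield x of x \in D.
Definition subfield_val u := let: Subfield x _ := u in x.
HB.instance Definition _ := [isSub for subfield_val].
HB.instance Definition _ := [Choice of subfield by <:].
HB.instance Definition _ := GRing.SubChoice_isSubIntegralDomain.Build L D subfield HD.
HB.instance Definition _ := [SubIntegralDomain_isSubField of subfield by <:].

Lemma polyOver_map_val (q : {poly subfield}) : map_poly val q \is a polyOver D.
Proof.
by apply/(polyOver_coefP _ (divring_closed0 HD)) => i; rewrite coef_map /=; exact: valP.
Qed.

Lemma polyOver_lift p : p \is a polyOver D -> exists q : {poly subfield}, p = map_poly val q.
Proof.
move=> /(polyOver_coefP _ (divring_closed0 HD)) Dp.
exists (\poly_(i < size p) insubd (0 : subfield) p`_i).
apply/polyP=> i; rewrite coef_map /= coef_poly.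
by case: ltnP => [_|le]; [rewrite insubdK | rewrite nth_default].
Qed.

Lemma algebraic_overE c : algebraic_over D c <-> algebraicOver (val : subfield -> L) c.
Proof.
split=> [[p /polyOver_lift[q ->] [nz qc]]|[q nz qc]].
  by exists q => //; apply: contra nz => /eqP->; rewrite map_poly0.
by exists (map_poly val q); rewrite ?polyOver_map_val ?map_poly_eq0.
Qed.

Lemma algebraic_over_mem c : c \in D -> algebraic_over D c.
Proof.
move=> Dc; apply/algebraic_overE.
by have := @algebraic_id subfield L val (insubd 0 c); rewrite /= insubdK.
Qed.

Lemma algebraic_overD c1 c2 :
  algebraic_over D c1 -> algebraic_over D c2 -> algebraic_over D (c1 + c2).
Proof. by move=> /algebraic_overE ? /algebraic_overE ?; apply/algebraic_overE/algebraic_add. Qed.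

Lemma algebraic_overN c : algebraic_over D c -> algebraic_over D (- c).
Proof. by move=> /algebraic_overE ?; apply/algebraic_overE/algebraic_opp. Qed.

Lemma algebraic_overM c1 c2 :
  algebraic_over D c1 -> algebraic_over D c2 -> algebraic_over D (c1 * c2).
Proof. by move=> /algebraic_overE ? /algebraic_overE ?; apply/algebraic_overE/algebraic_mul. Qed.

Lemma algebraic_overV c : algebraic_over D c -> algebraic_over D c^-1.
Proof. by move=> /algebraic_overE ?; apply/algebraic_overE/algebraic_inv. Qed.

Lemma algebraic_over_root p c : p != 0 -> root p c ->
  (forall i, algebraic_over D p`_i) -> algebraic_over D c.
Proof.
move=> p_nz pc Dp; apply/algebraic_overE/integral_algebraic.
apply: (integral_root p_nz pc) => _ /(nthP 0)[i _ <-].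
exact/integral_algebraic/algebraic_overE.
Qed.

Lemma algebraic_over_horner p c : (forall i, algebraic_over D p`_i) ->
  algebraic_over D c -> algebraic_over D p.[c].
Proof.
move=> Dp /algebraic_overE/integral_algebraic Dc.
apply/algebraic_overE/integral_algebraic; apply: integral_horner => // _ /(nthP 0)[i _ <-].
exact/integral_algebraic/algebraic_overE.
Qed.

Definition minimal_at a (m : {poly subfield}) :=
  [/\ m != 0, root (map_poly val m) a &
      forall r : {poly subfield}, r != 0 -> root (map_poly val r) a -> (size m <= size r)%N].

Lemma minimal_at_exists a : algebraic_over D a -> exists m, minimal_at a m.
Proof.
case/algebraic_overE => q q_nz qa.
pose P n := `[< exists r : {poly subfield}, [/\ r != 0, root (map_poly val r) a & size r = n] >].
have exP : exists n, P n by exists (size q); apply/asboolP; exists q.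
case: (ex_minnP exP) => n /asboolP[m [m_nz ma <-]] m_min.
by exists m; split=> // r r_nz ra; apply: m_min; apply/asboolP; exists r.
Qed.

Section MinimalAt.
Variables (a : L) (m : {poly subfield}) (mina : minimal_at a m).

Lemma minimal_at_size : (1 < size m)%N.
Proof.
have [m_nz ma _] := mina; rewrite ltnNge; apply/negP => /size1_polyC mC.
by move: ma m_nz; rewrite mC map_polyC rootC fmorph_eq0 polyC_eq0 => ->.
Qed.

Lemma minimal_at_dvdp r : root (map_poly val r) a -> m %| r.
Proof.
have [m_nz ma m_min] := mina => ra; apply/modp_eq0P/eqP/negPn/negP => rm_nz.
have : root (map_poly val (r %% m)) a.
  move: ra; rewrite [r in map_poly _ r](divp_eq r m) rmorphD rmorphM !rootE.
  by rewrite hornerD hornerM (rootP ma) mulr0 add0r.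
by move/(m_min _ rm_nz); rewrite leqNgt ltn_modp m_nz.
Qed.

Lemma minimal_at_coprimep r : ~~ root (map_poly val r) a -> coprimep r m.
Proof.
have [m_nz ma _] := mina => ra; set g := gcdp r m.
have g_nz : g != 0 by rewrite gcdp_eq0 negb_and m_nz orbT.
have ga : ~~ root (map_poly val g) a.
  by apply: contra ra; rewrite -(divpK (dvdp_gcdl r m)) rmorphM rootM => ->; rewrite orbT.
have mg_nz : m %/ g != 0.
  by apply: contraNneq m_nz => mg0; rewrite -(divpK (dvdp_gcdr r m)) mg0 mul0r.
have : m %| m %/ g.
  apply: minimal_at_dvdp; move: ma; rewrite -{1}(divpK (dvdp_gcdr r m)) rmorphM rootM.
  by rewrite (negbTE ga) orbF.
move/(dvdp_leq mg_nz); rewrite size_divp // coprimep_def -/g => le_m.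
rewrite eqn_leq size_poly_gt0 g_nz andbT leqNgt; apply: contraL le_m => g_gt1.
by rewrite -ltnNge ltn_subrL ltn_predRL g_gt1 size_poly_gt0 m_nz.
Qed.

Lemma minimal_at_simple_root : ~~ root (map_poly val m^`()) a.
Proof.
have [m_nz _ m_min] := mina; apply/negP => ma'.
have [k sm] : exists k, size m = k.+2 by exists (size m).-2; have := minimal_at_size; lia.
suff : map_poly val m^`() != 0.
  by rewrite map_poly_eq0 => /m_min/(_ ma'); rewrite leqNgt lt_size_deriv.
rewrite -deriv_map; apply/eqP => /(congr1 (fun p => p`_k))/eqP.
have lead_m : m`_k.+1 = lead_coef m by rewrite lead_coefE sm.
by rewrite coef_deriv coef0 coef_map lead_m mulrn_eq0 fmorph_eq0 lead_coef_eq0 (negbTE m_nz).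
Qed.

(* Roots of m are simple, so if a were the only one then m would be linear. *)
Lemma minimal_at_other_root : a \notin D -> exists2 y, y != a & root (map_poly val m) y.
Proof.
move=> aD; have [m_nz ma _] := mina; apply: contrapT => only_a.
have root_a y : root (map_poly val m) y -> y = a.
  by move=> my; apply/eqP/negPn/negP => ya; apply: only_a; exists y.
have lc_nz : lead_coef (map_poly val m) != 0 by rewrite lead_coef_eq0 map_poly_eq0.
have [rs Hm] := closed_field_poly_normal (map_poly val m).
have rs_a z : z \in rs -> z = a.
  by move=> zrs; apply: root_a; rewrite Hm rootZ // root_prod_XsubC.
have size_m : size m = (size rs).+1.
  by rewrite -(size_map_poly val) Hm size_scale // size_prod_XsubC.
case: rs Hm rs_a size_m => [|z1 [|z2 rs]] Hm rs_a size_m.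
- by have := minimal_at_size; rewrite size_m.
- case/negP: aD; set lc := lead_coef _ in Hm lc_nz.
  rewrite big_seq1 (rs_a z1) ?mem_head // in Hm.
  have m1 : val m`_1 = lc by rewrite -coef_map Hm coefZ coefB coefX coefC /= subr0 mulr1.
  have m0 : val m`_0 = - lc * a.
    by rewrite -coef_map Hm coefZ coefB coefX coefC /= sub0r mulrN mulNr.
  have -> : a = val (- m`_0 / m`_1).
    by rewrite fmorph_div rmorphN /= m0 m1; field.
  exact: valP.
- have /negP[] := minimal_at_simple_root.
  have [z1a z2a] : z1 = a /\ z2 = a by split; apply: rs_a; rewrite !inE eqxx ?orbT.
  rewrite -deriv_map Hm z1a z2a !big_cons derivZ rootZ //.
  by rewrite !derivM rootE hornerD !hornerM !hornerXsubC subrr !(mul0r, mulr0, addr0).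
Qed.

End MinimalAt.

Section Morph.
Variables (t : L -> L) (Ht : morph_on D t).

Definition subfield_morph (x : subfield) := t (val x).

Fact subfield_morph_zmod : zmod_morphism subfield_morph.
Proof. by case: Ht => tB _ _ x y; rewrite /subfield_morph rmorphB /= tB //; exact: valP. Qed.

Fact subfield_morph_monoid : monoid_morphism subfield_morph.
Proof.
case: Ht => _ tM t1; split=> [|x y]; first by rewrite /subfield_morph rmorph1.
by rewrite /subfield_morph rmorphM /= tM //; exact: valP.
Qed.

HB.instance Definition _ :=
  GRing.isZmodMorphism.Build subfield L subfield_morph subfield_morph_zmod.
HB.instance Definition _ :=
  GRing.isMonoidMorphism.Build subfield L subfield_morph subfield_morph_monoid.

Lemma map_poly_subfield_morph (q : {poly subfield}) :
  map_poly t (map_poly val q) = map_poly subfield_morph q.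
Proof. by apply/polyP=> i; rewrite (coef_map_morph_on HD Ht) !coef_map. Qed.

Lemma compatible_minimal_root a m b :
  minimal_at a m -> root (map_poly subfield_morph m) b -> compatible D t a b.
Proof.
move=> mina mb p /polyOver_lift[r ->]; rewrite map_poly_subfield_morph.
apply/idP/idP => [/(minimal_at_dvdp mina)/dvdpP[s ->] | rb].
  by rewrite rmorphM rootM mb orbT.
apply/negPn/negP => /(minimal_at_coprimep mina)/Bezout_eq1_coprimepP[[u v] /= uv].
move: (congr1 (fun s : {poly subfield} => (map_poly subfield_morph s).[b]) uv) => /=.
rewrite rmorphD !rmorphM rmorph1 hornerD !hornerM hornerC (rootP rb) (rootP mb).
by rewrite !mulr0 addr0 => /eqP; rewrite eq_sym oner_eq0.
Qed.

Lemma exists_compatible_root a : {in D, forall y, algebraic_over D (t y)} ->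
  algebraic_over D a -> exists2 b, compatible D t a b & algebraic_over D b.
Proof.
move=> Dt_alg /minimal_at_exists[m mina]; have [m_nz _ _] := mina.
have /closed_rootP[b mb] : size (map_poly subfield_morph m) != 1%N.
  by rewrite size_map_poly neq_ltn (minimal_at_size mina) orbT.
exists b; first exact: compatible_minimal_root mina mb.
move: mb; rewrite -map_poly_subfield_morph => mb.
have /(polyOver_coefP _ (divring_closed0 HD)) Dm := polyOver_map_val m.
apply: (algebraic_over_root _ mb) => [|i].
  by rewrite (map_poly_morph_on_eq0 HD Ht (polyOver_map_val m)) map_poly_eq0.
by rewrite (coef_map_morph_on HD Ht); apply: Dt_alg.
Qed.

Section Adjoin.
Variables (a b : L) (compat_ab : compatible D t a b).

Fact comm_val_a : commr_rmorph (val : subfield -> L) a.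
Proof. by move=> x; exact: mulrC. Qed.

Fact comm_morph_b : commr_rmorph subfield_morph b.
Proof. by move=> x; exact: mulrC. Qed.

Local Notation eval_a := (horner_morph comm_val_a).
Local Notation eval_b := (horner_morph comm_morph_b).

Lemma eval_b_eq0 r : (eval_b r == 0) = (eval_a r == 0).
Proof.
rewrite /horner_morph -!rootE -map_poly_subfield_morph.
by rewrite -compat_ab ?polyOver_map_val.
Qed.

Lemma eval_b_frac (p q p' q' : {poly subfield}) : eval_a q != 0 -> eval_a q' != 0 ->
  eval_a p / eval_a q = eval_a p' / eval_a q' -> eval_b p / eval_b q = eval_b p' / eval_b q'.
Proof.
move=> qa q'a /eqP; rewrite eqr_div // -!rmorphM -subr_eq0 -rmorphB -eval_b_eq0.
by rewrite rmorphB !rmorphM subr_eq0 -eqr_div ?eval_b_eq0 // => /eqP.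
Qed.

Definition frac_rep y (pq : {poly subfield} * {poly subfield}) :=
  (eval_a pq.2 != 0) && (y == eval_a pq.1 / eval_a pq.2).

Definition adjoined : {pred L} := fun y => `[< exists pq, frac_rep y pq >].

Definition adjoined_morph y :=
  if pselect (exists pq, frac_rep y pq) is left ex_pq then
    let: exist pq _ := cid ex_pq in eval_b pq.1 / eval_b pq.2
  else 0.

Lemma adjoinedP y : reflect (exists pq, frac_rep y pq) (y \in adjoined).
Proof. by rewrite unfold_in; exact: asboolP. Qed.

Lemma adjoined_frac (p q : {poly subfield}) : eval_a q != 0 -> eval_a p / eval_a q \in adjoined.
Proof. by move=> qa; apply/adjoinedP; exists (p, q); rewrite /frac_rep qa eqxx. Qed.

Lemma adjoined_morph_frac (p q : {poly subfield}) : eval_a q != 0 ->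
  adjoined_morph (eval_a p / eval_a q) = eval_b p / eval_b q.
Proof.
move=> qa; rewrite /adjoined_morph; case: pselect => [ex_pq|[]]; last first.
  by exists (p, q); rewrite /frac_rep qa eqxx.
by case: cid => -[p' q'] /andP[/= q'a /eqP E]; exact: eval_b_frac q'a qa (esym E).
Qed.

Lemma eval_a1_neq0 : eval_a 1 != 0.
Proof. by rewrite rmorph1 oner_eq0. Qed.

Lemma adjoined_divring_closed : GRing.divring_closed adjoined.
Proof.
split; first by have := adjoined_frac 1 eval_a1_neq0; rewrite rmorph1 divr1.
all: move=> _ _ /adjoinedP[[p q] /andP[/= qa /eqP->]] /adjoinedP[[p' q'] /andP[/= q'a /eqP->]].
  by rewrite (rmorph_fracB (f := eval_a)) // adjoined_frac // rmorphM mulf_neq0.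
have [p'a|p'a] := eqVneq (eval_a p') 0.
  by have := adjoined_frac 0 eval_a1_neq0; rewrite p'a mul0r invr0 mulr0 rmorph0 mul0r.
by rewrite (rmorph_fracV eval_a) adjoined_frac // rmorphM mulf_neq0.
Qed.

Lemma adjoined_morph_on : morph_on adjoined adjoined_morph.
Proof.
split; last by have := adjoined_morph_frac 1 eval_a1_neq0; rewrite !rmorph1 !divr1.
all: move=> _ _ /adjoinedP[[p q] /andP[/= qa /eqP->]] /adjoinedP[[p' q'] /andP[/= q'a /eqP->]].
all: have qq'a : eval_a (q * q') != 0 by rewrite rmorphM mulf_neq0.
  rewrite (rmorph_fracB (f := eval_a)) // !adjoined_morph_frac //.
  by rewrite (rmorph_fracB (f := eval_b)) ?eval_b_eq0.
by rewrite (rmorph_fracM eval_a) !adjoined_morph_frac // (rmorph_fracM eval_b).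
Qed.

Lemma adjoined_extends : extends D t adjoined adjoined_morph.
Proof.
have frac_mem d : d \in D -> d = eval_a (insubd 0 d)%:P / eval_a 1.
  by move=> Dd; rewrite rmorph1 divr1 horner_morphC /= insubdK.
split=> d Dd; rewrite {1}(frac_mem d Dd) ?adjoined_frac ?adjoined_morph_frac ?eval_a1_neq0 //.
by rewrite rmorph1 divr1 horner_morphC /= /subfield_morph insubdK.
Qed.

Lemma mem_adjoined_a : a \in adjoined.
Proof.
have := adjoined_frac 'X eval_a1_neq0.
by rewrite rmorph1 divr1 horner_morphX.
Qed.

Lemma adjoined_morph_a : adjoined_morph a = b.
Proof.
have := adjoined_morph_frac 'X eval_a1_neq0.
by rewrite !rmorph1 !divr1 !horner_morphX.
Qed.

Lemma adjoined_morph_rep y : y \in adjoined -> exists p q,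
  [/\ p \is a polyOver D, q \is a polyOver D &
      adjoined_morph y = (map_poly t p).[b] / (map_poly t q).[b]].
Proof.
case/adjoinedP => -[p q] /andP[/= qa /eqP->]; exists (map_poly val p), (map_poly val q).
by rewrite !polyOver_map_val adjoined_morph_frac // !map_poly_subfield_morph.
Qed.

End Adjoin.
End Morph.

Lemma exists_conjugate a : algebraic_over D a -> a \notin D ->
  exists2 y, y != a & compatible D id a y /\ algebraic_over D y.
Proof.
move=> /minimal_at_exists[m mina] aD; have [m_nz _ _] := mina.
have [y ya my] := minimal_at_other_root mina aD.
exists y => //; split.
  exact: (compatible_minimal_root (morph_on_id D) mina).
apply: (algebraic_over_root _ my) => [|i]; first by rewrite map_poly_eq0.
by rewrite coef_map; apply: algebraic_over_mem; exact: valP.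
Qed.

End Subfield.

Lemma compatible_transcendental D t a b : admissible D t -> ~ algebraic_over D a ->
  b - a \in D -> compatible D t a b.
Proof.
case=> HD Ht Dt_alg tr_a Dba p Dp.
have [-> | p_nz] := eqVneq p 0; first by rewrite map_poly0 !root0.
have -> : root p a = false by apply/negP => pa; apply: tr_a; exists p.
apply/esym/negP => tpb; apply: tr_a; have -> : a = b - (b - a) by rewrite subKr.
apply: (algebraic_overD HD); last exact/(algebraic_overN HD)/(algebraic_over_mem HD).
apply: (algebraic_over_root HD _ tpb) => [|i]; first by rewrite (map_poly_morph_on_eq0 HD Ht Dp).
have /(polyOver_coefP _ (divring_closed0 HD)) Dpi := Dp.
by rewrite (coef_map_morph_on HD Ht); apply: Dt_alg.
Qed.

Lemma extend_to_adjoin D t a b : admissible D t -> compatible D t a b ->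
  algebraic_over D b \/ b - a \in D ->
  exists D2 t2, [/\ admissible D2 t2, extends D t D2 t2, a \in D2 & t2 a = b].
Proof.
case=> HD Ht Dt_alg ab b_alg.
have HD2 := adjoined_divring_closed HD a.
have [sD t2D] := adjoined_extends HD Ht ab.
have aD2 := mem_adjoined_a HD a.
have b_alg2 : algebraic_over (adjoined HD a) b.
  case: b_alg => [/(algebraic_over_sub sD) // | Dba].
  rewrite -[b](subrK a); apply: (algebraic_overD HD2); apply: (algebraic_over_mem HD2) => //.
  exact: sD.
exists (adjoined HD a), (adjoined_morph HD t a b); split=> //.
- split=> //; first exact (adjoined_morph_on HD Ht ab).
  move=> y /(adjoined_morph_rep Ht ab)[p [q [Dp Dq ->]]].
  have coef_alg r i : r \is a polyOver D -> algebraic_over (adjoined HD a) (map_poly t r)`_i.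
    move=> /(polyOver_coefP _ (divring_closed0 HD)) Dr.
    by rewrite (coef_map_morph_on HD Ht); apply: algebraic_over_sub sD (Dt_alg _ (Dr i)).
  by apply: (algebraic_overM HD2); last apply: (algebraic_overV HD2);
    apply: (algebraic_over_horner HD2) b_alg2 => i; apply: coef_alg.
- exact (adjoined_morph_a HD Ht ab).
Qed.

Lemma extend_admissible D t a : admissible D t ->
  exists D2 t2, [/\ admissible D2 t2, extends D t D2 t2 & a \in D2].
Proof.
move=> adm; have [HD Ht Dt_alg] := adm.
have [alg_a|tr_a] := pselect (algebraic_over D a).
  have [b ab b_alg] := exists_compatible_root HD Ht Dt_alg alg_a.
  by have [D2 [t2 [? ? ? _]]] := extend_to_adjoin adm ab (or_introl b_alg); exists D2, t2.
have Daa : a - a \in D by rewrite subrr divring_closed0.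
have ab := compatible_transcendental adm tr_a Daa.
by have [D2 [t2 [? ? ? _]]] := extend_to_adjoin adm ab (or_intror Daa); exists D2, t2.
Qed.

Section Zorn.
Variables (D0 : {pred L}) (t0 : L -> L) (adm0 : admissible D0 t0).

Definition extension :=
  {Dt : (L -> bool) * (L -> L) | admissible Dt.1 Dt.2 /\ extends D0 t0 Dt.1 Dt.2}.

Definition extension_le (u v : extension) :=
  `[< extends (sval u).1 (sval u).2 (sval v).1 (sval v).2 >].

Lemma extension_le_refl u : extension_le u u.
Proof. exact/asboolP/extends_refl. Qed.

Lemma extension_le_trans u v w : extension_le u v -> extension_le v w -> extension_le u w.
Proof. by move=> /asboolP uv /asboolP vw; apply/asboolP; exact: extends_trans uv vw. Qed.

Section Chain.
Variables (A : classical_sets.set extension).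
Hypothesis A_total : classical_sets.total_on A extension_le.

Definition in_chain y := exists u, A u /\ y \in (sval u).1.

Definition chain_dom : {pred L} := fun y => `[< in_chain y >].

Definition chain_morph y :=
  if pselect (in_chain y) is left ex_u then let: exist u _ := cid ex_u in (sval u).2 y else 0.

Lemma chain_domP y : reflect (in_chain y) (y \in chain_dom).
Proof. by rewrite unfold_in; exact: asboolP. Qed.

Lemma chain_morphE u y : A u -> y \in (sval u).1 -> chain_morph y = (sval u).2 y.
Proof.
move=> Au yu; rewrite /chain_morph; case: pselect => [ex_v|[]]; last by exists u.
case: cid => v [Av yv].
by case: (A_total Av Au) => /asboolP[_ e]; [rewrite e | rewrite -e].
Qed.

Lemma chain_dom2 x y : x \in chain_dom -> y \in chain_dom ->
  exists u, [/\ A u, x \in (sval u).1 & y \in (sval u).1].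
Proof.
move=> /chain_domP[u [Au xu]] /chain_domP[v [Av yv]].
case: (A_total Au Av) => /asboolP[s _]; first by exists v; rewrite yv s.
by exists u; rewrite xu s.
Qed.

Lemma mem_chain_dom u y : A u -> y \in (sval u).1 -> y \in chain_dom.
Proof. by move=> Au yu; apply/chain_domP; exists u. Qed.

Lemma chain_extends u : A u -> extends (sval u).1 (sval u).2 chain_dom chain_morph.
Proof. by move=> Au; split=> y yu; [exact (mem_chain_dom Au yu) | exact: chain_morphE]. Qed.

Lemma chain_admissible u0 : A u0 -> admissible chain_dom chain_morph.
Proof.
have adm (u : extension) : admissible (sval u).1 (sval u).2 by case: u => -[D t] [].
move=> Au0; have [[D1 _ _] [_ _ t1] _] := adm u0.
split; [split | split | ].
- exact (mem_chain_dom Au0 D1).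
- move=> x y Dx Dy; have [u [Au xu yu]] := chain_dom2 Dx Dy; have [[_ uB _] _ _] := adm u.
  exact (mem_chain_dom Au (uB _ _ xu yu)).
- move=> x y Dx Dy; have [u [Au xu yu]] := chain_dom2 Dx Dy; have [[_ _ uV] _ _] := adm u.
  exact (mem_chain_dom Au (uV _ _ xu yu)).
- move=> x y Dx Dy; have [u [Au xu yu]] := chain_dom2 Dx Dy.
  have [[_ uB _] [tB _ _] _] := adm u.
  by rewrite !(chain_morphE Au) ?tB ?uB.
- move=> x y Dx Dy; have [u [Au xu yu]] := chain_dom2 Dx Dy; have [uD [_ tM _] _] := adm u.
  by rewrite !(chain_morphE Au) ?tM ?(divring_closedM uD).
- by rewrite (chain_morphE Au0 D1).
- move=> y /chain_domP[u [Au yu]]; have [_ _ uA] := adm u.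
  rewrite (chain_morphE Au yu); apply: algebraic_over_sub (uA _ yu) => z.
  exact (mem_chain_dom Au).
Qed.

End Chain.

Definition base_extension : extension :=
  exist _ (D0, t0) (conj adm0 (extends_refl D0 t0)).

Lemma extension_chain_ub (A : classical_sets.set extension) :
  classical_sets.total_on A extension_le -> exists v, forall u, A u -> extension_le u v.
Proof.
move=> A_total; have [[u0 Au0]|noA] := pselect (exists u, A u); last first.
  by exists base_extension => u Au; case: noA; exists u.
have ext_u0 : extends D0 t0 (sval u0).1 (sval u0).2 by case: (u0) => -[D t] [].
have ext0 := extends_trans ext_u0 (chain_extends A_total Au0).
exists (exist _ (chain_dom A, chain_morph A) (conj (chain_admissible A_total Au0) ext0)).
by move=> u Au; apply/asboolP; exact: chain_extends.
Qed.

Lemma extend_to_total : exists s : {rmorphism L -> L}, {in D0, s =1 t0}.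
Proof.
have [[[D t] [adm ext0]] M_max] := classical_sets.ZL_preorder base_extension
  extension_le_refl extension_le_trans extension_chain_ub.
have D_all a : a \in D.
  have [D2 [t2 [adm2 ext2 aD2]]] := extend_admissible a adm.
  pose v : extension := exist _ (D2, t2) (conj adm2 (extends_trans ext0 ext2)).
  by have /asboolP[/= + _] := M_max v (introT (asboolP _) ext2); apply.
have [_ [tB tM t1] _] := adm.
have t_total : morph_on predT t.
  by split=> //; [apply: sub_in2 tB | apply: sub_in2 tM] => y _; exact: D_all.
by exists (total_morph t_total); exact: (proj2 ext0).
Qed.

End Zorn.

Definition rationals : {pred L} := fun y => `[< is_rational y >].

Lemma rationalsP y : reflect (is_rational y) (y \in rationals).
Proof. by rewrite unfold_in; exact: asboolP. Qed.

Lemma rationals_closed : GRing.divring_closed rationals.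
Proof.
split; first by apply/rationalsP; exists 1; rewrite rmorph1.
all: move=> _ _ /rationalsP[q ->] /rationalsP[r ->]; apply/rationalsP.
  by exists (q - r); rewrite rmorphB.
by exists (q / r); rewrite fmorph_div.
Qed.

Lemma admissible_rationals : admissible rationals id.
Proof.
split; [exact: rationals_closed | exact: morph_on_id |].
by move=> y Qy; exact (algebraic_over_mem rationals_closed Qy).
Qed.

Lemma Khat_rational (x : L) : Khat x -> is_rational x.
Proof.
move=> fixed; apply: contrapT => irr_x.
have Qx : x \notin rationals by apply/rationalsP.
suff [y [yx xy y_alg]] : exists y, [/\ y != x, compatible rationals id x y &
                                       algebraic_over rationals y \/ y - x \in rationals].
  have [D2 [t2 [adm2 _ xD2 t2x]]] := extend_to_adjoin admissible_rationals xy y_alg.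
  have [s st2] := extend_to_total adm2.
  by move: yx; rewrite -t2x -(st2 _ xD2) fixed eqxx.
have [alg_x|tr_x] := pselect (algebraic_over rationals x).
  have [y yx [xy y_alg]] := exists_conjugate rationals_closed alg_x Qx.
  by exists y; split=> //; left.
have Q1 : x + 1 - x \in rationals.
  by rewrite addrAC subrr add0r; apply/rationalsP; exists 1; rewrite rmorph1.
exists (x + 1); split; last by right.
  by rewrite -subr_eq0 addrAC subrr add0r oner_eq0.
exact: compatible_transcendental admissible_rationals tr_x Q1.
Qed.

End Embeddings.

Theorem corollary2 :
  (forall x : CC, Ktilde x <-> Khat x) /\ (forall x : CC, Khat x <-> is_rational x).
Proof.
have Khat_rationalC (x : CC) : Khat x -> is_rational x :=
  @Khat_rational (complex Rdefinitions.R : numClosedFieldType) x.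
split=> x; split.
- exact: Ktilde_Khat.
- by move/Khat_rationalC/(@rational_Ktilde (complex Rdefinitions.R : numFieldType)).
- exact: Khat_rationalC.
- exact: rational_Khat.
Qed.
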